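(* Let $M$ be an entrywise nonnegative $m\times n$ real matrix and let $M=AW$ be a stable nonnegative matrix factorization with $A\in\mathbb{R}_{\ge0}^{m\times r}$, $W\in\mathbb{R}_{\ge0}^{r\times n}$. Let $s=\mathrm{rank}(A)$, let $U\subseteq[m]$ be a set of $s$ linearly independent rows of $A$, and let $B_1,\dots,B_p$ be the ensemble of $A$ at $U$. Then for each column index $i$, among the set of vectors $\mathcal S=\{B_1M_i^U,\dots,B_pM_i^U\}$, $W_i$ is the unique vector with lexicographically minimal support among all entrywise nonnegative vectors in $\mathcal S$.
   Context: Notation: $M_i$ is the $i$-th column, $M^j$ the $j$-th row; for sets of indices, $A_S$ denotes columns in $S$, $A^U$ rows in $U$, and $M_i^U$ the entries of column $M_i$ in rows $U$ (a vector in $\mathbb{R}^s$). $\mathrm{aff}(A)=\{\sum_i\alpha_iA_i:\alpha_i\ge0\}$. A subset $S\subseteq[r]$ of columns of $A$ is admissible for $v\in\mathbb{R}^m$ if $v\in\mathrm{aff}(A_S)$; a subset $T\subseteq[r]$ of rows of $W$ is admissible for a row vector $u$ if $u$ is a nonnegative combination of rows of $W^T$. Lexicographic ordering on subsets of $[r]$: if $|S|<|T|$ then $S$ precedes $T$; equal-size subsets are compared by the standard lexicographic order. Support = set of indices of nonzero entries. $M=AW$ is stable if, with $S_i$ the lexicographically first subset of columns of $A$ admissible for $M_i$ and $T_j$ the lexicographically first subset of rows of $W$ admissible for $M^j$, each $W_i$ is supported in $S_i$ and each row $A^j$ is supported in $T_j$. Ensemble: let $S_1,\dots,S_p\subseteq[r]$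 be the full list (in lexicographic order) of all sets of $s$ columns of $A$ that are linearly independent; the ensemble of $A$ at $U$ is $B_1,\dots,B_p$, where $B_k$ is the $r\times s$ matrix that is zero on all rows outside $S_k$ and whose restriction to the rows in $S_k$ equals $(A^U_{S_k})^{-1}$ (the inverse of the $s\times s$ submatrix of $A$ with rows $U$ and columns $S_k$). *)

From HB Require Import structures.
From mathcomp Require Import all_boot all_order all_algebra.
Set Implicit Arguments. Unset Strict Implicit. Unset Printing Implicit Defensive.
Import Order.TTheory GRing.Theory Num.Theory.
Local Open Scope ring_scope.

Fixpoint seqlex_lt (s t : seq nat) : bool :=
  match s, t with
  | [::], [::] => false
  | [::], _ :: _ => true
  | _ :: _, [::] => false
  | x :: s', y :: t' => (x < y)%N || ((x == y) && seqlex_lt s' t')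
  end.

(* Lexicographic ordering on subsets of [r]: smaller cardinality first; equal
   cardinality compared by the standard lexicographic order of the increasingly
   sorted lists of elements (enum S is increasing). *)
Definition setlex_lt (r : nat) (S T : {set 'I_r}) : bool :=
  (#|S| < #|T|)%N ||
  ((#|S| == #|T|) && seqlex_lt (map val (enum S)) (map val (enum T))).

Definition lexfirst (r : nat) (P : {set 'I_r} -> Prop) (S : {set 'I_r}) : Prop :=
  P S /\ forall T, P T -> T <> S -> setlex_lt S T.

Definition csupp (R : ringType) (r : nat) (v : 'cV[R]_r) : {set 'I_r} :=
  [set j | v j 0 != 0].
Definition rsupp (R : ringType) (r : nat) (v : 'rV[R]_r) : {set 'I_r} :=
  [set j | v 0 j != 0].

Definition mx_nonneg (R : numDomainType) (p q : nat) (X : 'M[R]_(p, q)) : Prop :=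
  forall i j, 0 <= X i j.

Definition col_admissible (R : numDomainType) (m r : nat) (A : 'M[R]_(m, r))
  (v : 'cV[R]_m) (S : {set 'I_r}) : Prop :=
  exists alpha : 'cV[R]_r,
    (forall j, 0 <= alpha j 0) /\ (forall j, j \notin S -> alpha j 0 = 0) /\
    v = A *m alpha.

Definition row_admissible (R : numDomainType) (r n : nat) (W : 'M[R]_(r, n))
  (u : 'rV[R]_n) (T : {set 'I_r}) : Prop :=
  exists beta : 'rV[R]_r,
    (forall j, 0 <= beta 0 j) /\ (forall j, j \notin T -> beta 0 j = 0) /\
    u = beta *m W.

Definition stable (R : numDomainType) (m n r : nat) (M : 'M[R]_(m, n))
  (A : 'M[R]_(m, r)) (W : 'M[R]_(r, n)) : Prop :=
  (forall (i : 'I_n) (S : {set 'I_r}),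
      lexfirst (col_admissible A (col i M)) S -> csupp (col i W) \subset S) /\
  (forall (j : 'I_m) (T : {set 'I_r}),
      lexfirst (row_admissible W (row j M)) T -> rsupp (row j A) \subset T).

Definition rows_of (R : Type) (m r : nat) (A : 'M[R]_(m, r)) (U : {set 'I_m})
  : 'M[R]_(#|U|, r) := \matrix_(a < #|U|, j < r) A (enum_val a) j.
Definition cols_of (R : Type) (m r : nat) (A : 'M[R]_(m, r)) (S : {set 'I_r})
  : 'M[R]_(m, #|S|) := \matrix_(i < m, b < #|S|) A i (enum_val b).

Definition subsq (R : Type) (m r : nat) (A : 'M[R]_(m, r)) (U : {set 'I_m})
  (S : {set 'I_r}) (h : #|S| = #|U|) : 'M[R]_#|U| :=
  \matrix_(a < #|U|, b < #|U|) A (enum_val a) (enum_val (cast_ord (esym h) b)).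

(* The ensemble member B_S : the r x s matrix, zero outside the rows in S,
   whose restriction to the rows in S is (A^U_S)^{-1}. *)
Definition ens_mx (R : fieldType) (m r : nat) (A : 'M[R]_(m, r)) (U : {set 'I_m})
  (S : {set 'I_r}) (h : #|S| = #|U|) : 'M[R]_(r, #|U|) :=
  (\matrix_(j < r, b < #|U|) ((j == enum_val (cast_ord (esym h) b))%:R : R))
    *m invmx (subsq A h).

Definition colU (R : Type) (m n : nat) (M : 'M[R]_(m, n)) (U : {set 'I_m})
  (i : 'I_n) : 'cV[R]_#|U| := \col_(a < #|U|) M (enum_val a) i.

(* The set {B_1 M_i^U, ..., B_p M_i^U}, B_k ranging over the ensemble of A at U,
   i.e. over all sets S of s = |U| linearly independent columns of A. *)
Definition ensemble_vecs (R : fieldType) (m n r : nat) (A : 'M[R]_(m, r))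
  (M : 'M[R]_(m, n)) (U : {set 'I_m}) (i : 'I_n) (v : 'cV[R]_r) : Prop :=
  exists (S : {set 'I_r}) (h : #|S| = #|U|),
    \rank (cols_of A S) = #|S| /\ v = ens_mx A h *m colU M U i.

From HB Require Import structures.
From mathcomp Require Import all_boot all_order all_algebra.
From Stdlib Require Import Classical.
Set Implicit Arguments. Unset Strict Implicit. Unset Printing Implicit Defensive.
Import Order.TTheory GRing.Theory Num.Theory.
Local Open Scope ring_scope.

(* Stability forces supp W_i to be the lexicographically first set S admissible
   for M_i = A W_i: supp W_i is itself admissible, and stability puts it inside S.
   By a Caratheodory argument, a lexicographically first support indexes linearly
   independent columns of A, so it extends to a set S of rank A independent columns.
   As the rows U span the row space of A, the ensemble member B_S recovers W_i from
   M_i^U.  Conversely every B_k M_i^U = v satisfies A v = A W_i, so a nonnegative v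
   has an admissible support; this support comes lexicographically after supp W_i
   unless it equals it, and then independence of those columns gives v = W_i. *)

Lemma seqlex_ltxx (s : seq nat) : seqlex_lt s s = false.
Proof. by elim: s => //= x s ->; rewrite ltnn eqxx. Qed.

Lemma seqlex_lt_trans (s t u : seq nat) :
  seqlex_lt s t -> seqlex_lt t u -> seqlex_lt s u.
Proof.
elim: s t u => [|x s IH] [|y t] [|z u] //= /orP[lxy|/andP[/eqP-> lst]].
- by case/orP=> [/(ltn_trans lxy)->|/andP[/eqP<- _]]; rewrite ?lxy.
- by case/orP=> [->|/andP[/eqP-> ltu]]; rewrite ?eqxx ?(IH _ _ lst ltu) ?orbT.
Qed.

Lemma seqlex_lt_total (s t : seq nat) : size s = size t -> s != t ->
  seqlex_lt s t || seqlex_lt t s.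
Proof.
elim: s t => [|x s IH] [|y t] //= [/IH{}IH].
by case: ltngtP => //= <-; rewrite eqseq_cons eqxx !andTb; apply: IH.
Qed.

Section SetLex.
Variable r : nat.
Implicit Types (S T V : {set 'I_r}) (P : {set 'I_r} -> Prop).

Lemma setlex_ltxx S : setlex_lt S S = false.
Proof. by rewrite /setlex_lt ltnn seqlex_ltxx andbF. Qed.

Lemma setlex_lt_trans S T V : setlex_lt S T -> setlex_lt T V -> setlex_lt S V.
Proof.
rewrite /setlex_lt => /orP[lST|/andP[/eqP-> lST]] /orP[lTV|/andP[/eqP eTV lTV]].
- by rewrite (ltn_trans lST lTV).
- by rewrite -eTV lST.
- by rewrite lTV.
- by rewrite eTV eqxx (seqlex_lt_trans lST lTV) orbT.
Qed.

Lemma setlex_lt_total S T : S != T -> setlex_lt S T || setlex_lt T S.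
Proof.
move=> neST; rewrite /setlex_lt; case: ltngtP => // eST; rewrite !orFb !andTb.
apply: seqlex_lt_total; first by rewrite !size_map -(cardE S) -(cardE T).
apply: contra neST => /eqP/(inj_map val_inj) eST_enum.
by apply/eqP/setP => x; rewrite -(mem_enum S) eST_enum mem_enum.
Qed.

Lemma setlex_lt_card S T : setlex_lt S T -> (#|S| <= #|T|)%N.
Proof. by case/orP=> [/ltnW|/andP[/eqP-> _]]. Qed.

Lemma lexfirst_exists P S0 : P S0 -> exists S, lexfirst P S.
Proof.
pose below S := #|[set T | setlex_lt T S]|.
elim: {S0}(below S0).+1 {-2}S0 (ltnSn (below S0)) => // k IH S0 ltk PS0.
have [[T [PT ltTS0]]|noT] := classic (exists T, P T /\ setlex_lt T S0).
  apply: (IH T) => //; rewrite -ltnS (leq_trans _ ltk) // ltnS proper_card //.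
  apply/properP; split; last by exists T; rewrite !inE ?setlex_ltxx.
  by apply/subsetP => V; rewrite !inE => /setlex_lt_trans; apply.
exists S0; split=> // T PT neTS0.
have /orP[//|ltTS0] := setlex_lt_total (introN eqP (nesym neTS0)).
by case: noT; exists T.
Qed.

Lemma lexfirst_sub_eq P S T : lexfirst P S -> P T -> T \subset S -> S = T.
Proof.
move=> [_ minS] PT sTS; apply: NNPP => neST.
have /setlex_lt_card leST := minS T PT (nesym neST).
by apply: neST; apply/eqP; rewrite eq_sym eqEcard sTS.
Qed.

End SetLex.

Definition supported (R : nzRingType) r (S : {set 'I_r}) (x : 'cV[R]_r) : Prop :=
  forall j, j \notin S -> x j 0 = 0.

Lemma supported_csupp (R : nzRingType) r (x : 'cV[R]_r) : supported (csupp x) x.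
Proof. by move=> j; rewrite inE negbK => /eqP. Qed.

Lemma col_mulmx (R : nzRingType) m p n (A : 'M[R]_(m, p)) (W : 'M[R]_(p, n)) i :
  col i (A *m W) = A *m col i W.
Proof. by apply/matrixP => a c; rewrite !mxE; apply: eq_bigr => j _; rewrite !mxE. Qed.

Lemma col_nonneg (R : numDomainType) p n (W : 'M[R]_(p, n)) i :
  mx_nonneg W -> mx_nonneg (col i W).
Proof. by move=> W0 j c; rewrite mxE. Qed.

Lemma col_admissible_csupp (R : numDomainType) m r (A : 'M[R]_(m, r)) (w : 'cV[R]_r) :
  mx_nonneg w -> col_admissible A (A *m w) (csupp w).
Proof.
by move=> w0; exists w; split; [move=> j; apply: w0 | split=> //; apply: supported_csupp].
Qed.

Lemma stable_lexfirst_csupp (R : numDomainType) m n r (M : 'M[R]_(m, n))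
    (A : 'M[R]_(m, r)) (W : 'M[R]_(r, n)) (i : 'I_n) :
  mx_nonneg W -> M = A *m W -> stable M A W ->
  lexfirst (col_admissible A (A *m col i W)) (csupp (col i W)).
Proof.
move=> W0 MAW [stable_col _].
have W0i := col_nonneg i W0.
have [S lexS] := lexfirst_exists (col_admissible_csupp A W0i).
have <- // : S = csupp (col i W).
apply: (lexfirst_sub_eq lexS); first exact: col_admissible_csupp.
by apply: stable_col; rewrite MAW col_mulmx.
Qed.

Section Selection.
Variables (R : fieldType) (r : nat).
Implicit Types S : {set 'I_r}.

Definition sel k (f : 'I_k -> 'I_r) : 'M[R]_(r, k) :=
  \matrix_(j, b) (j == f b)%:R.

Definition enumerates k (f : 'I_k -> 'I_r) (S : {set 'I_r}) : Prop :=
  [/\ injective f, forall b, f b \in S & forall j, j \in S -> exists b, f b = j].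

Lemma enumerates_enum_val S : enumerates (@enum_val _ (mem S)) S.
Proof.
split; [exact: enum_val_inj | exact: enum_valP |].
by move=> j jS; exists (enum_rank_in jS j); rewrite enum_rankK_in.
Qed.

Lemma enumerates_cast S k (h : #|S| = k) :
  enumerates (fun b : 'I_k => enum_val (cast_ord (esym h) b)) S.
Proof.
split; [by move=> a b /enum_val_inj/cast_ord_inj | by move=> b; apply: enum_valP |].
by move=> j jS; exists (cast_ord h (enum_rank_in jS j)); rewrite cast_ordK enum_rankK_in.
Qed.

Variables (k : nat) (f : 'I_k -> 'I_r).

Lemma mulmx_sel p (X : 'M[R]_(p, r)) : X *m sel f = \matrix_(a, b) X a (f b).
Proof.
apply/matrixP => a b; rewrite !mxE (bigD1 (f b)) //= big1 => [|j /negbTE nej].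
  by rewrite mxE eqxx mulr1 addr0.
by rewrite mxE nej mulr0.
Qed.

Lemma tr_sel_mulmx p (X : 'M[R]_(r, p)) : (sel f)^T *m X = \matrix_(b, c) X (f b) c.
Proof.
apply/matrixP => b c; rewrite !mxE (bigD1 (f b)) //= big1 => [|j /negbTE nej].
  by rewrite !mxE eqxx mul1r addr0.
by rewrite !mxE nej mul0r.
Qed.

Variable S : {set 'I_r}.
Hypothesis fS : enumerates f S.

Lemma tr_sel_sel : (sel f)^T *m sel f = 1%:M.
Proof.
have [f_inj _ _] := fS.
by rewrite tr_sel_mulmx; apply/matrixP => a b; rewrite !mxE (inj_eq f_inj) eq_sym.
Qed.

Lemma sel_inj p : injective (@mulmx R r k p (sel f)).
Proof. by move=> y z /(congr1 (mulmx (sel f)^T)); rewrite !mulmxA tr_sel_sel !mul1mx. Qed.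

Lemma sel_entry_notin j b : j \notin S -> (j == f b)%:R = 0 :> R.
Proof. by have [_ fS' _] := fS; move=> jS; rewrite eq_sym (negbTE (memPn jS _ (fS' b))). Qed.

Lemma supported_sel (y : 'cV[R]_k) : supported S (sel f *m y).
Proof.
by move=> j jS; rewrite !mxE big1 // => b _; rewrite !mxE sel_entry_notin // mul0r.
Qed.

Lemma sel_tr_selK (x : 'cV[R]_r) : supported S x -> sel f *m ((sel f)^T *m x) = x.
Proof.
have [f_inj _ ontoS] := fS; move=> xS; rewrite tr_sel_mulmx.
apply/matrixP => j c; rewrite (ord1 c) !mxE.
have [jS|jS] := boolP (j \in S); last first.
  by rewrite xS // big1 // => b _; rewrite !mxE sel_entry_notin // mul0r.
have [b0 <-] := ontoS j jS.
rewrite (bigD1 b0) //= big1 => [|b neb]; first by rewrite !mxE eqxx mul1r addr0.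
by rewrite !mxE (inj_eq f_inj) eq_sym (negbTE neb) mul0r.
Qed.

End Selection.

Lemma full_col_rankP (R : fieldType) p k (X : 'M[R]_(p, k)) :
  (forall y : 'cV[R]_k, X *m y = 0 -> y = 0) <-> \rank X = k.
Proof.
split => [Xinj|rkX y Xy0].
  rewrite -mxrank_tr; apply/eqP/inj_row_free => v vX0; apply: trmx_inj.
  by rewrite trmx0; apply: Xinj; rewrite -[X]trmxK -trmx_mul vX0 trmx0.
have freeXT : row_free X^T by rewrite /row_free mxrank_tr rkX.
apply: trmx_inj; apply/eqP.
by rewrite trmx0 -(mulmx_free_eq0 _ freeXT) -trmx_mul Xy0 trmx0.
Qed.

Section Independence.
Variables (R : fieldType) (m r : nat) (A : 'M[R]_(m, r)).
Implicit Types (S T : {set 'I_r}) (x : 'cV[R]_r).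

Definition indep S : Prop := forall x, supported S x -> A *m x = 0 -> x = 0.

Lemma not_indep_kernel S : ~ indep S -> exists x, [/\ supported S x, A *m x = 0 & x != 0].
Proof.
move=> depS; apply: NNPP => noDep; apply: depS => x xS Ax0.
by apply/eqP/negPn/negP => nx0; apply: noDep; exists x.
Qed.

Local Notation selS S := (sel R (@enum_val _ (mem S))).

Lemma cols_ofE S : cols_of A S = A *m selS S.
Proof. by rewrite mulmx_sel; apply/matrixP => i b; rewrite !mxE. Qed.

Lemma mulmx_supported S x : supported S x -> A *m x = cols_of A S *m ((selS S)^T *m x).
Proof. by move=> xS; rewrite cols_ofE -mulmxA (sel_tr_selK (enumerates_enum_val S)). Qed.

Lemma rank_cols_of_indep S : \rank (cols_of A S) = #|S| <-> indep S.
Proof.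
have ES := enumerates_enum_val S; rewrite -full_col_rankP; split => [inj x xS Ax0|iS y].
  by rewrite -(sel_tr_selK ES xS) (inj ((selS S)^T *m x)) ?mulmx0 // -mulmx_supported.
rewrite cols_ofE -mulmxA => /(iS _ (supported_sel ES y)) Ey0.
by apply: (sel_inj ES); rewrite Ey0 mulmx0.
Qed.

Lemma indep_card S : indep S -> (#|S| <= \rank A)%N.
Proof. by move/rank_cols_of_indep <-; rewrite cols_ofE mxrankM_maxl. Qed.

Lemma indep_grow S : indep S -> (#|S| < \rank A)%N -> exists2 j, j \notin S & indep (j |: S).
Proof.
move=> iS ltSA; apply: NNPP => noGrow.
suff: (A^T <= (cols_of A S)^T)%MS.
  by move/mxrankS; rewrite !mxrank_tr (rank_cols_of_indep S).2 // leqNgt ltSA.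
apply/row_subP => j; rewrite -tr_col.
suff [x [xS ->]] : exists x, supported S x /\ col j A = A *m x.
  by rewrite (mulmx_supported xS) trmx_mul submxMl.
have [jS|jS] := boolP (j \in S).
  exists (delta_mx j 0); rewrite -colE; split=> // k kS; rewrite mxE.
  by rewrite eq_sym (negbTE (memPn kS _ jS)).
have [x [xS Ax0 nx0]] : exists x, [/\ supported (j |: S) x, A *m x = 0 & x != 0].
  by apply: not_indep_kernel => ijS; apply: noGrow; exists j.
have xj0 : x j 0 != 0.
  apply: contra nx0 => /eqP xj0; apply/eqP/iS => // k kS.
  by have [->//|nekj] := eqVneq k j; rewrite (xS k) // in_setU1 negb_or nekj.
exists (delta_mx j 0 - (x j 0)^-1 *: x); split.
  move=> k kS; rewrite !mxE; have [->|nekj] := eqVneq k j.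
    by rewrite eqxx mulVf // subrr.
  by rewrite (xS k) ?mulr0 ?subr0 // in_setU1 negb_or nekj.
by rewrite mulmxBr -scalemxAr Ax0 scaler0 subr0 colE.
Qed.

Lemma indep_extend T : indep T -> exists S, [/\ T \subset S, indep S & #|S| = \rank A].
Proof.
move=> iT; suff grow d S : T \subset S -> indep S -> (#|S| + d)%N = \rank A ->
    exists S, [/\ T \subset S, indep S & #|S| = \rank A].
  by apply: (grow (\rank A - #|T|)%N T (subxx T) iT); rewrite subnKC // indep_card.
elim: d S => [|d IH] S TS iS eSA; first by exists S; rewrite -eSA addn0.
have [j jS ijS] : exists2 j, j \notin S & indep (j |: S).
  by apply: indep_grow; rewrite // -eSA addnS ltnS leq_addr.
apply: (IH (j |: S)) => //; first exact: subset_trans TS (subsetUr _ _).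
by rewrite cardsU1 jS add1n addSnnS.
Qed.

End Independence.

Lemma rows_of_span (R : fieldType) m r (A : 'M[R]_(m, r)) (U : {set 'I_m}) :
  \rank (rows_of A U) = \rank A -> exists C, A = C *m rows_of A U.
Proof.
move=> rkU; apply/submxP.
have sub_rows : (rows_of A U <= A)%MS.
  have -> : rows_of A U = (sel R (@enum_val _ (mem U)))^T *m A.
    by rewrite tr_sel_mulmx; apply/matrixP => a j; rewrite !mxE.
  exact: submxMl.
by have [_ <-] := mxrank_leqif_sup sub_rows; rewrite rkU.
Qed.

Section Ensemble.
Variables (R : fieldType) (m r : nat) (A : 'M[R]_(m, r)) (U : {set 'I_m}).
Variables (C : 'M[R]_(m, #|U|)) (S : {set 'I_r}) (h : #|S| = #|U|).
Hypotheses (AC : A = C *m rows_of A U) (iS : indep A S).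
Local Notation f := (fun b => enum_val (cast_ord (esym h) b)).

Lemma subsqE : subsq A h = rows_of A U *m sel R f.
Proof. by rewrite mulmx_sel; apply/matrixP => a b; rewrite !mxE. Qed.

Lemma subsq_unit : subsq A h \in unitmx.
Proof.
rewrite -row_free_unit /row_free; apply/eqP/full_col_rankP => y.
rewrite subsqE -mulmxA => rows_y0; apply: (sel_inj (enumerates_cast h)).
rewrite mulmx0; apply: iS; first exact: supported_sel (enumerates_cast h) y.
by rewrite AC -mulmxA rows_y0 mulmx0.
Qed.

Lemma rows_of_ens_mx : rows_of A U *m ens_mx A h = 1%:M.
Proof. by rewrite /ens_mx -/(sel R f) mulmxA -subsqE mulmxV // subsq_unit. Qed.

Lemma ens_mx_supportedK x : supported S x -> ens_mx A h *m (rows_of A U *m x) = x.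
Proof.
move=> xS; have fS := enumerates_cast h.
rewrite -(sel_tr_selK fS xS) (mulmxA (rows_of A U)) -subsqE.
by rewrite /ens_mx -/(sel R f) -mulmxA mulKmx // subsq_unit.
Qed.

End Ensemble.

Section Caratheodory.
Variables (R : realFieldType) (m r : nat) (A : 'M[R]_(m, r)).
Implicit Types (w x y : 'cV[R]_r).

Lemma dependent_neg_entry S : ~ indep A S ->
  exists x, [/\ supported S x, A *m x = 0 & exists j, x j 0 < 0].
Proof.
case/not_indep_kernel => x [xS Ax0 nx0].
have [j xj0] : exists j, x j 0 != 0.
  apply: NNPP => allx0; apply/negP: nx0; apply/negPn/eqP/matrixP => j c.
  by rewrite (ord1 c) mxE; apply/eqP/negPn/negP => xj0; apply: allx0; exists j.
have [xj_neg|xj_pos|/eqP] := ltgtP (x j 0) 0; last by rewrite (negbTE xj0).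
  by exists x; split=> //; exists j.
exists (- x); split; last by exists j; rewrite mxE oppr_lt0.
  by move=> k kS; rewrite mxE xS ?oppr0.
by rewrite mulmxN Ax0 oppr0.
Qed.

(* Ratio test: move from w along the kernel direction x until a coordinate vanishes. *)
Lemma caratheodory_step w : mx_nonneg w -> ~ indep A (csupp w) ->
  exists y, [/\ mx_nonneg y, A *m y = A *m w & (#|csupp y| < #|csupp w|)%N].
Proof.
move=> w0 /dependent_neg_entry [x [xS Ax0 [j1 xj1]]].
pose ratio j := w j 0 / - x j 0.
case: (@arg_minP _ R _ j1 (fun j => x j 0 < 0) ratio xj1) => j0 xj0 ratio_min.
pose t := ratio j0.
have t0 : 0 <= t by rewrite divr_ge0 ?w0 // oppr_ge0 ltW.
pose y := w + t *: x.
have yE k : y k 0 = w k 0 + t * x k 0 by rewrite !mxE.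
have y0 : mx_nonneg y.
  move=> k c; rewrite (ord1 c) yE; have [xk_neg|xk_ge0] := ltP (x k 0) 0.
    have := ratio_min k xk_neg.
    by rewrite /ratio ler_pdivlMr ?oppr_gt0 // mulrN -subr_ge0 opprK.
  by apply: addr_ge0; [apply: w0 | apply: mulr_ge0].
have j0w : j0 \in csupp w.
  by apply: contraT => j0w; move: xj0; rewrite xS ?ltxx.
have yj0 : y j0 0 = 0.
  by rewrite yE /t /ratio invrN mulrN mulNr -mulrA mulVf ?mulr1 ?subrr // lt_eqF.
exists y; split=> //; first by rewrite mulmxDr -scalemxAr Ax0 scaler0 addr0.
rewrite (cardsD1 j0 (csupp w)) j0w add1n ltnS subset_leq_card //.
apply/subsetP => k; rewrite !inE => yk0; apply/andP; split.
  by apply: contraNneq yk0 => ->; rewrite yj0.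
by apply: contraTneq yk0 => wk0; rewrite negbK yE wk0 (xS k) ?inE ?wk0 ?eqxx // mulr0 addr0.
Qed.

Variable w : 'cV[R]_r.
Hypotheses (w0 : mx_nonneg w) (lexw : lexfirst (col_admissible A (A *m w)) (csupp w)).

Lemma lexfirst_csupp_indep : indep A (csupp w).
Proof.
apply: NNPP => /(caratheodory_step w0) [y [y0 Ayw ltyw]].
have neyw : csupp y <> csupp w by move=> eyw; rewrite eyw ltnn in ltyw.
have admy : col_admissible A (A *m w) (csupp y).
  by rewrite -Ayw; apply: col_admissible_csupp.
by have := setlex_lt_card (lexw.2 _ admy neyw); rewrite leqNgt ltyw.
Qed.

Lemma lexfirst_csupp_lt v : mx_nonneg v -> A *m v = A *m w -> v <> w ->
  setlex_lt (csupp w) (csupp v).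
Proof.
move=> v0 Avw nevw; apply: lexw.2; first by rewrite -Avw; apply: col_admissible_csupp.
move=> evw; apply: nevw; apply/eqP; rewrite -subr_eq0; apply/eqP.
apply: lexfirst_csupp_indep; last by rewrite mulmxBr Avw subrr.
move=> j jw; rewrite !mxE (supported_csupp jw).
by rewrite -evw in jw; rewrite (supported_csupp jw) subrr.
Qed.

End Caratheodory.

Unset Implicit Arguments.

Theorem mainTheorem4 (R : realFieldType) (m n r : nat)
  (M : 'M[R]_(m, n)) (A : 'M[R]_(m, r)) (W : 'M[R]_(r, n)) (U : {set 'I_m}) :
  mx_nonneg M -> mx_nonneg A -> mx_nonneg W -> M = A *m W ->
  stable M A W ->
  #|U| = \rank A ->
  \rank (rows_of A U) = #|U| ->
  forall i : 'I_n,
    ensemble_vecs A M U i (col i W) /\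
    (forall v : 'cV[R]_r, ensemble_vecs A M U i v -> mx_nonneg v ->
       v <> col i W -> setlex_lt (csupp (col i W)) (csupp v)).
Proof.
move=> _ _ W0 MAW stableMAW rkA rkU i.
have lexw := stable_lexfirst_csupp i W0 MAW stableMAW.
have w0 := col_nonneg i W0.
have indep_w := lexfirst_csupp_indep w0 lexw.
have [C AC] := rows_of_span (etrans rkU rkA).
have MiU : colU M U i = rows_of A U *m col i W.
  by rewrite MAW; apply/matrixP => a c; rewrite !mxE; apply: eq_bigr => j _; rewrite !mxE.
split.
  have [S [wS iS cardS]] := indep_extend indep_w.
  have h : #|S| = #|U| by rewrite cardS rkA.
  exists S, h; split; first exact/rank_cols_of_indep.
  rewrite MiU (ens_mx_supportedK h AC iS) // => j jS.
  by apply: supported_csupp; apply: contra jS; apply: subsetP.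
move=> _ [S [h [/rank_cols_of_indep iS ->]]] v0.
apply: (lexfirst_csupp_lt w0 lexw) => //.
by rewrite {1}AC -mulmxA (mulmxA (rows_of A U)) (rows_of_ens_mx h AC iS) mul1mx MiU mulmxA -AC.
Qed.
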